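(* Let $M\ge 2$ be an integer. (Downlink) If $0<P<P_{\mathrm{cross,DL}}:=\frac{4}{M-1}$, then for every integer $K$ with $2\le K\le M$, $$K\log_2\!\left(1+\frac{P(M+1)}{P(K-1)+K}\right)> K\log_2\!\left(1+\frac{P(M-K+1)}{K}\right).$$ (Uplink) If $0<P_u<P_{\mathrm{cross,UL}}:=\frac{1}{M-1}$, then for every integer $K$ with $2\le K\le M$, $$K\log_2\!\left(1+\frac{P_uM}{P_u(K-1)+1}\right)> K\log_2\!\left(1+P_u(M-K+1)\right).$$
   Context: The left-hand sides are the paper's closed-form low-SNR ergodic sum-rate expressions for maximum ratio transmission with matrix normalization (downlink, total power $P$) and maximum ratio combining (uplink, per-user power $P_u$), and the right-hand sides are those for zero-forcing with vector normalization (downlink) and zero-forcing reception (uplink), for $M$ base-station antennas and $K$ single-antenna users. The lemma states that below the power cross point, MRT/MRC is better than ZF regardless of the number of active users. *)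

From Stdlib Require Import Reals.
Open Scope R_scope.

Definition log2 (x : R) : R := ln x / ln 2.

Definition P_cross_DL (M : nat) : R := 4 / (INR M - 1).
Definition P_cross_UL (M : nat) : R := 1 / (INR M - 1).

Definition rate_MRT (M K : nat) (P : R) : R :=
  INR K * log2 (1 + P * (INR M + 1) / (P * (INR K - 1) + INR K)).
Definition rate_ZF_DL (M K : nat) (P : R) : R :=
  INR K * log2 (1 + P * (INR M - INR K + 1) / INR K).
Definition rate_MRC (M K : nat) (Pu : R) : R :=
  INR K * log2 (1 + Pu * INR M / (Pu * (INR K - 1) + 1)).
Definition rate_ZF_UL (M K : nat) (Pu : R) : R :=
  INR K * log2 (1 + Pu * (INR M - INR K + 1)).

(* Both rates are K log2 (1 + SINR), so it suffices to compare the SINRs.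
   Cross-multiplying, the MRT/MRC SINR wins iff P (K-1)(M-K+1) < K^2
   (downlink), resp. P_u (M-K+1) < 1 (uplink). Since M-K+1 <= M-1, both
   follow from P (M-1) < 4 <= K^2/(K-1), resp. P_u (M-1) < 1. *)

From Stdlib Require Import Reals Lra Psatz.
Open Scope R_scope.

Lemma log2_lt (x y : R) : 0 < x -> x < y -> log2 x < log2 y.
Proof.
  intros Hx Hxy; unfold log2.
  assert (Hln2 : 0 < ln 2) by (rewrite <- ln_1; apply ln_increasing; lra).
  apply Rmult_lt_compat_r; [apply Rinv_0_lt_compat; lra|].
  apply ln_increasing; lra.
Qed.

Lemma mul_lt_of_lt_div (a c d : R) : 0 < d -> a < c / d -> a * d < c.
Proof.
  intros Hd H.
  apply (Rmult_lt_compat_r d) in H; [|exact Hd].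
  now replace (c / d * d) with c in H by (field; lra).
Qed.

Lemma lt_div_of_mul_lt (a c d : R) : 0 < d -> a * d < c -> a < c / d.
Proof.
  intros Hd H.
  replace a with (a * d / d) by (field; lra).
  apply Rmult_lt_compat_r; [apply Rinv_0_lt_compat|]; lra.
Qed.

Lemma div_lt_div_of_cross (a b c d : R) :
  0 < b -> 0 < d -> a * d < c * b -> a / b < c / d.
Proof.
  intros Hb Hd H.
  apply lt_div_of_mul_lt; [exact Hd|].
  replace (a / b * d) with (a * d / b) by (field; lra).
  replace c with (c * b / b) by (field; lra).
  apply Rmult_lt_compat_r; [apply Rinv_0_lt_compat|]; lra.
Qed.

Lemma zf_dl_sinr_lt_mrt_sinr (m k P : R) :
  2 <= k -> k <= m -> 0 < P -> P < 4 / (m - 1) ->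
  P * (m - k + 1) / k < P * (m + 1) / (P * (k - 1) + k).
Proof.
  intros Hk Hkm HP HPc.
  assert (HP4 : P * (m - 1) < 4) by (apply mul_lt_of_lt_div; lra).
  assert (Hkey : P * (k - 1) * (m - k + 1) < k * k).
  { assert (P * (k - 1) * (m - k + 1) <= P * (k - 1) * (m - 1))
      by (apply Rmult_le_compat_l; nra).
    assert (4 * (k - 1) <= k * k) by nra.
    nra. }
  apply div_lt_div_of_cross; nra.
Qed.

Lemma zf_ul_sinr_lt_mrc_sinr (m k Pu : R) :
  2 <= k -> k <= m -> 0 < Pu -> Pu < 1 / (m - 1) ->
  Pu * (m - k + 1) < Pu * m / (Pu * (k - 1) + 1).
Proof.
  intros Hk Hkm HPu HPc.
  assert (HP1 : Pu * (m - 1) < 1) by (apply mul_lt_of_lt_div; lra).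
  assert (Hkey : Pu * (m - k + 1) * (k - 1) < k - 1).
  { assert (Pu * (m - k + 1) < 1) by nra.
    rewrite <- (Rmult_1_l (k - 1)) at 2.
    apply Rmult_lt_compat_r; lra. }
  apply lt_div_of_mul_lt; [nra|].
  assert (Pu * (Pu * (m - k + 1) * (k - 1)) < Pu * (k - 1))
    by (apply Rmult_lt_compat_l; lra).
  nra.
Qed.

Theorem lemma8 (M : nat) (HM : (2 <= M)%nat) :
  (forall P : R, 0 < P -> P < P_cross_DL M ->
     forall K : nat, (2 <= K)%nat -> (K <= M)%nat ->
       rate_MRT M K P > rate_ZF_DL M K P) /\
  (forall Pu : R, 0 < Pu -> Pu < P_cross_UL M ->
     forall K : nat, (2 <= K)%nat -> (K <= M)%nat ->
       rate_MRC M K Pu > rate_ZF_UL M K Pu).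
Proof.
  split; intros P HP HPc K HK HKM;
    assert (Hk : 2 <= INR K) by (apply (le_INR 2); exact HK);
    assert (Hkm : INR K <= INR M) by (apply le_INR; exact HKM);
    apply Rmult_lt_compat_l; try lra; apply log2_lt.
  - assert (0 <= P * (INR M - INR K + 1) / INR K)
      by (apply Rle_mult_inv_pos; nra).
    lra.
  - apply Rplus_lt_compat_l, zf_dl_sinr_lt_mrt_sinr; assumption.
  - nra.
  - apply Rplus_lt_compat_l, zf_ul_sinr_lt_mrc_sinr; assumption.
Qed.
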